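(* Let $N\subset M\subset G$ be subgroups, both normal in $G$, with $N$ contained in the center of $M$, and let $\sigma$ be a proper closed ribbon. For $n\in N$ and $t\in G/M$ put $J_\sigma^{n,t}:=\sum_{x\in t}F_\sigma^{n,x}$ (here $t$ is regarded as a subset of $G$). Then $J_\sigma^{n,t}=\sum_{C}K_\sigma^{\{n\},C}$, where the sum runs over those $C\in\mathrm{Conj}(G/N,M/N)$ whose elements (as cosets of $N$) are contained in $t$, and $K_\sigma^{\{n\},C}$ is the operator $K_\sigma^{DC}$ with $D=\{n\}$ (a conjugacy class of $N'_C$ since $n$ is central in $M$).
   Context: Setting. $G$ is a finite group; $\bar g$ denotes $g^{-1}$. A lattice is embedded in an orientable surface, with vertex set $V$, edge set $E$, face set $F$; every edge is oriented, no edge has equal endpoints, and a face with $s$ edges has $s$ distinct vertices (same conditions for the dual lattice). Dual edges $e^*$ are oriented so that $e^*$ crosses $e$ from right to left. For each edge $e$ there is an inverse edge $\bar e$ with reversed orientation ($\bar{\bar e}=e$); $\bar E$ is the set of inverse edges. Each edge $e\in E$ carries a qudit $\mathbb C[G]$ with orthonormal basis $\{|g\rangle\}_{g\in G}$; $\mathcal H_G=\bigotimes_{e\in E}\mathbb C[G]$. Single-qudit operators: $L^h=\sum_g|hg\rangle\langle g|$, $T^g=|g\rangle\langle g|$, $I=\sum_g|\bar g\rangle\langle g|$. Sites and triangles. A site is a pair $s=(v,f)$ with $f$ a face and $v$ a vertex of $f$; write $s=(v_s,f_s)$. A direct triangle $\tau=(s_0,s_1,e)$ consists of sites $s_0,s_1$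 with $f_{s_0}=f_{s_1}$ and $e\in E\cup\bar E$ going from $v_{s_0}$ to $v_{s_1}$, such that $s_0,s_1,e$ form a triangle with sides in counterclockwise order. A dual triangle $\tau=(s_0,s_1,e^* )$ consists of sites with $v_{s_0}=v_{s_1}$ and a dual edge $e^*$ ($e\in E\cup\bar E$) going from the dual vertex $f_{s_0}^*$ to $f_{s_1}^*$, with sides in clockwise order. Write $\partial_i\tau=s_i$, $e_\tau=e$. The complementary triangle $\bar\tau$ is the triangle of the same type with edge $\bar e_\tau$. Triangle operators: for a dual triangle $L_\tau^h:=I^xL^hI^x$, for a direct triangle $T_\tau^g:=I^xT^gI^x$, acting on the qudit of the underlying edge of $e_\tau$, with $x=0$ if $e_\tau\in E$ and $x=1$ if $e_\tau\in\bar E$. Ribbons. A strip is either trivial (a single site) or a sequence of triangles $\rho=(\tau_1,\dots,\tau_n)$ with $\partial_1\tau_i=\partial_0\tau_{i+1}$; its ends are $\partial_0\rho=\partial_0\tau_1$, $\partial_1\rho=\partial_1\tau_n$; composition $\rho_1\rho_2$ is concatenation when $\partial_1\rho_1=\partial_0\rho_2$. If $\tau'_1,\dots,\tau'_q$ are its direct triangles in order, its direct path has vertices $v_0=v_{\partial_0\tau'_1},v_1=v_{\partial_1\tau'_1},\dots,v_q=v_{\partial_1\tau'_q}$; its dual path has the faces $f_0,\dots,f_r$ defined analogously from its dual triangles. A ribbon is a strip such that no triangle occurs together with its complement, the $v_i$ are pairwise distinct except possibly $v_0=v_q$, and the $f_i$ are pairwise distinct except possibly $f_0=f_r$. A ribbon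 is direct (dual) if it consists only of direct (dual) triangles, proper if it is neither, open if $v_{\partial_0\rho}\ne v_{\partial_1\rho}$ and $f_{\partial_0\rho}\ne f_{\partial_1\rho}$, closed if $\partial_0\rho=\partial_1\rho$. Ribbon operators. For a trivial ribbon $F^{h,g}=\delta_{1,g}$; for a dual triangle $F_\tau^{h,g}=\delta_{1,g}L_\tau^h$; for a direct triangle $F_\tau^{h,g}=T_\tau^g$; for a ribbon $\rho=\rho_1\rho_2$, $F_\rho^{h,g}=\sum_{k\in G}F_{\rho_1}^{h,k}F_{\rho_2}^{\bar khk,\bar kg}$ (independent of the decomposition). Closed-ribbon operators. $\mathrm{Conj}(G/N,M/N)$ is the set of orbits of $G/N$ under conjugation by $M/N$. For each such orbit $C$ fix $r_C\in G$ with $r_CN\in C$, let $N'_C:=\{m\in M: m r_C\bar m\bar r_C\in N\}$ and let $Q_C\subset M$ be a set of representatives of $M/N'_C$. For $D$ a conjugacy class of $N'_C$, $K_\sigma^{DC}:=\sum_{q\in Q_C}\sum_{d\in D}\sum_{n\in N}F_\sigma^{\,qd\bar q,\;qr_C\bar q n}$. *)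

From HB Require Import structures.
From mathcomp Require Import all_boot all_order all_algebra all_fingroup all_solvable all_field.
Set Implicit Arguments. Unset Strict Implicit. Unset Printing Implicit Defensive.
Import GRing.Theory.
Local Open Scope ring_scope.

(* V : vertices, E : (oriented) edges, Fc : faces.                      *)
(* tl e / hd e : tail / head vertex of e;                               *)
(* lf e / rf e : face to the left / right of e (w.r.t. the orientation  *)
(* of the surface).  The dual edge e^* goes from (rf e)^* to (lf e)^*   *)
(* (it crosses e from right to left).                                   *)

(* elements of E \cup \bar E : (e,false) = e, (e,true) = \bar e *)
Definition dart (E : finType) := (E * bool)%type.
Definition site (V Fc : finType) := (V * Fc)%type.
(* a triangle is determined by its type (true = direct, false = dual)
   and by its edge e_tau in E \cup \bar E *)
Definition triangle (E : finType) := (bool * dart E)%type.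

Inductive strip (V E Fc : finType) :=
  | STrivial of site V Fc
  | STris of triangle E & seq (triangle E).

Section Lattice.
Variables (V E Fc : finType) (tl hd : E -> V) (lf rf : E -> Fc).

Definition dtail (d : dart E) := if d.2 then hd d.1 else tl d.1.
Definition dhead (d : dart E) := if d.2 then tl d.1 else hd d.1.
Definition dleft (d : dart E) := if d.2 then rf d.1 else lf d.1.
Definition dright (d : dart E) := if d.2 then lf d.1 else rf d.1.
Definition drev (d : dart E) : dart E := (d.1, ~~ d.2).

Definition incident (v : V) (f : Fc) : bool :=
  [exists e, ((lf e == f) || (rf e == f)) && ((tl e == v) || (hd e == v))].
Definition is_site (s : site V Fc) := incident s.1 s.2.

Definition wf_lattice : Prop :=
  [/\ forall e, tl e != hd e,
      forall e, lf e != rf e,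
      forall f, #|[set e | (lf e == f) || (rf e == f)]| = #|[set v | incident v f]|
    & forall v, #|[set e | (tl e == v) || (hd e == v)]| = #|[set f | incident v f]| ].

(* Direct triangle (s0,s1,e): s0 = (tail e, f), s1 = (head e, f), and the
   counterclockwise order of s0,s1,e forces f to be the face right of e.
   Dual triangle (s0,s1,e^* ): v = tail e, e^* goes from the right face of e to
   the left face of e, clockwise order of s0,s1,e^*. *)
Definition tri0 (t : triangle E) : site V Fc := (dtail t.2, dright t.2).
Definition tri1 (t : triangle E) : site V Fc :=
  if t.1 then (dhead t.2, dright t.2) else (dtail t.2, dleft t.2).
Definition tri_compl (t : triangle E) : triangle E := (t.1, drev t.2).

Definition strip_tris (s : strip V E Fc) : seq (triangle E) :=
  match s with STrivial _ => [::] | STris t ts => t :: ts end.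

Definition strip0 (s : strip V E Fc) : site V Fc :=
  match s with STrivial x => x | STris t _ => tri0 t end.
Definition strip1 (s : strip V E Fc) : site V Fc :=
  match s with STrivial x => x | STris t ts => tri1 (last t ts) end.

Definition direct_path (ts : seq (triangle E)) : seq V :=
  match [seq t <- ts | t.1] with
  | [::] => [::]
  | t :: _ as ds => (tri0 t).1 :: [seq (tri1 u).1 | u <- ds]
  end.
Definition dual_path (ts : seq (triangle E)) : seq Fc :=
  match [seq t <- ts | ~~ t.1] with
  | [::] => [::]
  | t :: _ as ds => (tri0 t).2 :: [seq (tri1 u).2 | u <- ds]
  end.

Definition distinct_but_ends (T : eqType) (x0 : T) (s : seq T) : Prop :=
  forall i j, (i < j < size s)%N -> ~~ ((i == 0%N) && (j == (size s).-1)) ->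
    nth x0 s i != nth x0 s j.

Definition is_ribbon (s : strip V E Fc) : Prop :=
  match s with
  | STrivial x => is_site x
  | STris t ts =>
      [/\ path (fun a b => tri1 a == tri0 b) t ts,
          forall u, u \in t :: ts -> tri_compl u \notin t :: ts,
          forall x0, distinct_but_ends x0 (direct_path (t :: ts))
        & forall x0, distinct_but_ends x0 (dual_path (t :: ts)) ]
  end.

Definition proper_strip (s : strip V E Fc) : bool :=
  has (fun t : triangle E => t.1) (strip_tris s) &&
  has (fun t : triangle E => ~~ t.1) (strip_tris s).
Definition closed_strip (s : strip V E Fc) : bool := strip0 s == strip1 s.

End Lattice.

(* Operators on H_G = (x)_{e in E} C[G], as matrices in the basis of     *)
(* group-valued configurations c : E -> G.                              *)
Section Operators.
Variables (gT : finGroupType) (E : finType).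

Definition cfg := {ffun E -> gT}.
Definition op := cfg -> cfg -> algC.
Definition qop := gT -> gT -> algC.   (* single-qudit operator *)

Definition qmul (A B : qop) : qop := fun a c => \sum_(b : gT) A a b * B b c.
Definition qL (h : gT) : qop := fun a b => (a == (h * b)%g)%:R.
Definition qT (g : gT) : qop := fun a b => ((a == b) && (b == g))%:R.
Definition qI : qop := fun a b => (a == b^-1%g)%:R.
Definition qIconj (x : bool) (A : qop) : qop :=
  if x then qmul qI (qmul A qI) else A.

Definition on_edge (e : E) (A : qop) : op := fun c c' =>
  A (c e) (c' e) * [forall e', (e' != e) ==> (c e' == c' e')]%:R.

Definition opid : op := fun c c' => (c == c')%:R.
Definition opmul (A B : op) : op := fun c c'' => \sum_(c' : cfg) A c c' * B c' c''.

Definition L_tri (t : triangle E) (h : gT) : op := on_edge t.2.1 (qIconj t.2.2 (qL h)).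
Definition T_tri (t : triangle E) (g : gT) : op := on_edge t.2.1 (qIconj t.2.2 (qT g)).

Definition F_tri (t : triangle E) (h g : gT) : op :=
  if t.1 then T_tri t g
  else fun c c' => (g == 1%g)%:R * L_tri t h c c'.

Fixpoint F_seq (ts : seq (triangle E)) (h g : gT) : op :=
  match ts with
  | [::] => fun c c' => (g == 1%g)%:R * opid c c'
  | t :: ts' => fun c c'' =>
      \sum_(k : gT) opmul (F_tri t h k) (F_seq ts' (k^-1 * h * k)%g (k^-1 * g)%g) c c''
  end.

Definition F_rib (V Fc : finType) (s : strip V E Fc) (h g : gT) : op :=
  F_seq (strip_tris s) h g.

End Operators.

Section ClosedRibbon.
Variables (gT : finGroupType) (N M : {group gT}).

(* Conj(G/N, M/N), with G the whole group gT *)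
Definition ConjQ : {set {set coset_of N}} :=
  [set (x ^: (M / N))%g | x : coset_of N].

(* N'_C for the chosen representative r = r_C *)
Definition Nprime (r : gT) : {set gT} :=
  [set m in M | (m * r * m^-1 * r^-1)%g \in N].

Variables (V E Fc : finType).

(* K_sigma^{DC} given the choices r = r_C and Q = Q_C *)
Definition K_op (s : strip V E Fc) (D : {set gT}) (r : gT) (Q : {set gT}) : op gT E :=
  fun c c' => \sum_(q in Q) \sum_(d in D) \sum_(m in N)
     F_rib s (q * d * q^-1)%g (q * r * q^-1 * m)%g c c'.

Definition J_op (s : strip V E Fc) (n : gT) (t : {set gT}) : op gT E :=
  fun c c' => \sum_(x in t) F_rib s n x c c'.

End ClosedRibbon.

From HB Require Import structures.
From mathcomp Require Import all_boot all_order all_algebra all_fingroup all_solvable all_field.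
From Stdlib Require Import FunctionalExtensionality.
Import GRing.Theory.

Set Implicit Arguments. Unset Strict Implicit.

(* The identity J_sigma^{n,t} = sum_C K_sigma^{{n},C} is a re-indexing of a
   finite sum: both sides are sums of the operators F_sigma^{n,x}, so it suffices to prove, for an arbitrary
   function F from G to an additive monoid, that
     sum_{x in t} F x = sum_C sum_{q in Q_C} sum_{m in N} F (q r_C q^-1 m),
   where C ranges over the classes of Conj(G/N, M/N) contained in t.
   This is done in two steps:
   1. the classes Conj(G/N, M/N) partition G/N, and the class of xN lies in
      the M-coset of x, so the sum over t splits into sums over the classes
      contained in t (sum_by_classes);
   2. for a class C with representative r N, the map (q, m) |-> q r q^-1 m is a
      bijection from Q_C x N onto the union of C: the classes of G/N under M are
      orbits, the stabiliser of r N in M is N'_C, and Q_C is a transversal of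
      its left cosets (sum_over_class).
   Finally n is central in M, so q n q^-1 = n and D = {n} contributes one term. *)

Local Open Scope group_scope.

(* Elementary facts on quotients by a subgroup that is normal in the whole
   group, where coset H is a morphism defined everywhere. *)
Section NormalInWhole.
Variables (gT : finGroupType) (H : {group gT}).
Hypothesis nHG : H <| [set: gT].

Lemma norm_whole x : x \in 'N(H).
Proof. exact: subsetP (normal_norm nHG) x (in_setT x). Qed.

Lemma cosetM x y : coset H (x * y) = coset H x * coset H y.
Proof. by rewrite morphM ?norm_whole. Qed.

Lemma cosetV x : coset H x^-1 = (coset H x)^-1.
Proof. by rewrite morphV ?norm_whole. Qed.

Lemma cosetJ x y : coset H (x ^ y) = coset H x ^ coset H y.
Proof. by rewrite morphJ ?norm_whole. Qed.

Lemma mem_coset_self x : x \in (coset H x : {set gT}).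
Proof. by rewrite val_coset ?norm_whole // rcoset_refl. Qed.

Lemma coset_eq_mul x y : coset H x = coset H y -> exists2 k, k \in H & x = y * k.
Proof.
move=> exy; exists (y^-1 * x); last by rewrite mulKVg.
by apply: coset_idr; rewrite ?norm_whole // cosetM cosetV exy mulVg.
Qed.

End NormalInWhole.

Section ClassSums.
Variables (gT : finGroupType) (N M : {group gT}).
Hypotheses (nNG : N <| [set: gT]) (nMG : M <| [set: gT]) (sNM : N \subset M).

Lemma quotient_elemP z : z \in M / N -> exists2 g, g \in M & z = coset N g.
Proof. by case/morphimP=> g _ gM ->; exists g. Qed.

Lemma class_sub_cosetM x X :
  X \in coset N x ^: (M / N) -> (X : {set gT}) \subset coset M x.
Proof.
case/imsetP=> _ /quotient_elemP[g gM ->] ->; rewrite -cosetJ //.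
apply/subsetP=> y /coset_mem /(coset_eq_mul nNG)[k kN ->].
suff -> : coset M x = coset M (x ^ g * k) by apply: mem_coset_self.
by rewrite cosetM // cosetJ // (coset_id gM) (coset_id (subsetP sNM k kN)) conjg1 mulg1.
Qed.

Lemma sum_by_classes (R : nmodType) (t : coset_of M) (F : gT -> R) :
  (\sum_(x in (t : {set gT})) F x =
   \sum_(C in ConjQ N M | [forall X in C, (X : {set gT}) \subset (t : {set gT})])
      \sum_(x | coset N x \in C) F x)%R.
Proof.
rewrite (partition_big (fun x => coset N x ^: (M / N))
   (fun C => (C \in ConjQ N M) && [forall X in C, (X : {set gT}) \subset t])) /=.
  apply: eq_bigr => _ /andP[/imsetP[y _ ->] /forall_inP sub_t].
  apply: eq_bigl => x; apply/andP/idP => [[_ /eqP <-] | xC].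
    exact: class_refl.
  by rewrite (class_eqP xC) eqxx (subsetP (sub_t _ xC)) ?mem_coset_self.
move=> x xt; apply/andP; split; first exact: imset_f.
apply/forall_inP => X /class_sub_cosetM.
by rewrite (coset_mem xt).
Qed.

Section OneClass.
Variables (r : gT) (Q : {set gT}).
Hypothesis trQ : is_transversal Q (lcosets (Nprime N M r) M) M.

(* conj_rep u = (rN)^(u^-1 N) = u r u^-1 N: the orbit map of rN under M/N,
   precomposed with inversion. *)
Definition conj_rep u := coset N r ^ (coset N u)^-1.

Lemma conj_repE u : coset N (u * r * u^-1) = conj_rep u.
Proof. by rewrite /conj_rep -cosetV // -cosetJ // conjgE invgK !mulgA. Qed.

Lemma conj_rep_eq u v :
  (conj_rep u == conj_rep v) = (conj_rep (v^-1 * u) == coset N r).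
Proof.
rewrite /conj_rep cosetM // cosetV // invMg invgK conjgM.
by rewrite -[X in _ = (_ == X)](conjgKV (coset N v)) (inj_eq (conjg_inj _)).
Qed.

Lemma Nprime_stab m : (m \in Nprime N M r) = (m \in M) && (conj_rep m == coset N r).
Proof.
rewrite inE; congr (_ && _); rewrite -divg_eq1 -conj_repE -cosetV // -cosetM //.
by apply/idP/eqP => [/coset_id // | /coset_idr->]; rewrite ?norm_whole.
Qed.

Lemma conj_rep_mulr q a : a \in Nprime N M r -> conj_rep (q * a) = conj_rep q.
Proof. by rewrite Nprime_stab => /andP[_ a_stab]; apply/eqP; rewrite conj_rep_eq mulKg. Qed.

Lemma transversal_conj_rep_exists g :
  g \in M -> exists2 q, q \in Q & conj_rep q = conj_rep g.
Proof.
move=> gM; set P := lcosets (Nprime N M r) M.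
have [/and3P[/eqP coverM _ _] _ _] := and3P trQ.
have gP : g \in cover P by rewrite coverM.
have Pg := pblock_mem gP; have gPg : g \in pblock P g by rewrite mem_pblock.
have qQ := repr_mem_transversal trQ 1 Pg; have qPg := repr_mem_pblock trQ 1 Pg.
move: (transversal_repr _ _ _) qQ qPg => q qQ; exists q => //; move: qPg gPg.
case/imsetP: Pg => q0 _ -> /imsetP[a aN ->] /imsetP[b bN ->].
by rewrite !conj_rep_mulr.
Qed.

Lemma transversal_conj_rep_inj u v :
  u \in Q -> v \in Q -> conj_rep u = conj_rep v -> u = v.
Proof.
move=> uQ vQ /eqP; rewrite conj_rep_eq => stab.
have [uM vM] := (subsetP (transversal_sub trQ) u uQ, subsetP (transversal_sub trQ) v vQ).
have [/and3P[_ tiP _] _ _] := and3P trQ.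
have one_stab : 1 \in Nprime N M r.
  by rewrite Nprime_stab group1 /conj_rep morph1 invg1 conjg1 eqxx.
have vB : v *: Nprime N M r \in lcosets (Nprime N M r) M by apply/lcosetsP; exists v.
apply: (pblock_inj trQ uQ vQ).
by rewrite !(def_pblock tiP vB) // mem_lcoset ?mulVg // Nprime_stab groupM ?groupV.
Qed.

Definition class_param (p : gT * gT) := p.1 * r * p.1^-1 * p.2.

Lemma class_param_inj : {in setX Q N &, injective class_param}.
Proof.
move=> [u m] [v m'] /setXP[uQ mN] /setXP[vQ m'N]; rewrite /class_param /= => e.
have uv : u = v.
  apply: transversal_conj_rep_inj => //.
  by rewrite -!conj_repE -(coset_kerr _ mN) e coset_kerr.
by move: e; rewrite uv => /mulgI ->.
Qed.

Lemma class_param_image x :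
  (coset N x \in coset N r ^: (M / N)) = (x \in class_param @: setX Q N).
Proof.
have sQM := transversal_sub trQ.
apply/idP/imsetP => [| [[q m] /setXP[qQ mN] ->]]; last first.
  rewrite /class_param /= coset_kerr // conj_repE /conj_rep -cosetV //.
  by rewrite memJ_class // mem_quotient // groupV (subsetP sQM).
case/imsetP=> _ /quotient_elemP[g gM ->] ex.
have [q qQ eq] := transversal_conj_rep_exists (groupVr gM).
exists (q, (q * r * q^-1)^-1 * x); last by rewrite /class_param /= mulKVg.
rewrite inE qQ /=; apply: coset_idr; first exact: norm_whole.
by rewrite cosetM // cosetV // conj_repE eq /conj_rep cosetV // invgK ex mulVg.
Qed.

Lemma sum_over_class (R : nmodType) (F : gT -> R) :
  (\sum_(x | coset N x \in coset N r ^: (M / N)) F x =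
   \sum_(q in Q) \sum_(m in N) F (q * r * q^-1 * m)%g)%R.
Proof.
rewrite pair_big /= (eq_bigl (fun p => p \in setX Q N)); last by move=> p; rewrite inE.
rewrite -(big_imset F class_param_inj) /=.
by apply: eq_bigl => x; rewrite class_param_image.
Qed.

End OneClass.

Lemma sum_coset_by_transversals (R : nmodType) (t : coset_of M) (F : gT -> R)
    (r : {set coset_of N} -> gT) (Q : {set coset_of N} -> {set gT}) :
  (forall C, C \in ConjQ N M -> coset N (r C) \in C) ->
  (forall C, C \in ConjQ N M ->
     is_transversal (Q C) (lcosets (Nprime N M (r C)) M) M) ->
  (\sum_(x in (t : {set gT})) F x =
   \sum_(C in ConjQ N M | [forall X in C, (X : {set gT}) \subset (t : {set gT})])
     \sum_(q in Q C) \sum_(m in N) F (q * r C * q^-1 * m)%g)%R.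
Proof.
move=> hr hQ; rewrite sum_by_classes; apply: eq_bigr => C /andP[CQ _].
rewrite -(sum_over_class (hQ C CQ)); have [y _ defC] := imsetP CQ.
by move: (hr C CQ); rewrite defC => /class_eqP ->.
Qed.

End ClassSums.

Local Open Scope ring_scope.

Theorem mainTheorem10 (gT : finGroupType) (N M : {group gT})
    (V E Fc : finType) (tl hd : E -> V) (lf rf : E -> Fc)
    (wf : wf_lattice tl hd lf rf)
    (nNG : (N <| [set: gT])%g) (nMG : (M <| [set: gT])%g)
    (sNM : N \subset M) (cNM : N \subset 'Z(M)%g)
    (r : {set coset_of N} -> gT) (Q : {set coset_of N} -> {set gT})
    (hr : forall C, C \in ConjQ N M -> coset N (r C) \in C)
    (hQ : forall C, C \in ConjQ N M ->
            is_transversal (Q C) (lcosets (Nprime N M (r C)) M) M)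
    (sigma : strip V E Fc)
    (hrib : is_ribbon tl hd lf rf sigma)
    (hprop : proper_strip sigma) (hclosed : closed_strip tl hd lf rf sigma)
    (n : gT) (hn : n \in N) (t : coset_of M) :
  J_op sigma n (t : {set gT}) =
  (fun c c' => \sum_(C in ConjQ N M | [forall X in C, (X : {set gT}) \subset (t : {set gT})])
      K_op N sigma [set n] (r C) (Q C) c c').
Proof.
apply: functional_extensionality => c; apply: functional_extensionality => c'.
rewrite /J_op (sum_coset_by_transversals nNG nMG sNM t _ hr hQ).
apply: eq_bigr => C /andP[CQ _]; apply: eq_bigr => q qQ; rewrite big_set1.
(* n is central in M, so conjugating it by q in Q_C (a subset of M) fixes it *)
have qM := subsetP (transversal_sub (hQ C CQ)) q qQ.
have /centerP[_ n_central] := subsetP cNM n hn.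
by rewrite -(n_central q qM) mulgK.
Qed.
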